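(* For integers $i,j\ge1$, the central element $m_{i+j,i}=m_{(i+j,i)}(L_1,\dots,L_4)\in\mathbb Z S_4$ satisfies \begin{align*} \langle 1,m_{i+j,i}\rangle&=\tfrac{1}{24}(1+(-1)^j)\big(6^i3^j+6^i2^j+3^{i+j}+3^i+(10+9(-1)^i)(2^{i+j}+2^i)+22(-1)^i\big),\\ \langle s_1,m_{i+j,i}\rangle&=\tfrac{1}{24}(1-(-1)^j)\big(3^j6^i+2^j6^i+3^{i+j}+3^i+(4+3(-1)^i)2^{i+j}+(4-3(-1)^i)2^i\big),\\ \langle s_{12},m_{i+j,i}\rangle&=\tfrac{1}{24}(1+(-1)^j)\big(3^j6^i+2^j6^i+3^{i+j}+3^i+2^{i+j}+2^i-2(-1)^i\big),\\ \langle s_{13},m_{i+j,i}\rangle&=\tfrac{1}{24}(1+(-1)^j)\big(3^j6^i+2^j6^i+3^{i+j}+3^i-(2+3(-1)^i)(2^i+2^{i+j})-2(-1)^i\big),\\ \langle s_{123},m_{i+j,i}\rangle&=\tfrac{1}{24}(1-(-1)^j)\big(3^j6^i+2^j6^i+3^i+3^{i+j}+3(-1)^i(2^i-2^{i+j})-2(2^i+2^{i+j})\big). \end{align*}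
   Context: $S_4$ is the symmetric group on $\{1,2,3,4\}$, $\mathbb Z S_4$ its integral group ring. Let $s_1=(1\,2)$, $s_2=(2\,3)$, $s_3=(3\,4)$, $s_{12}=s_1s_2$, $s_{13}=s_1s_3$, $s_{123}=s_1s_2s_3$. The Jucys–Murphy elements are $L_1=0$ and $L_i=\sum_{k=1}^{i-1}(k\ i)$ for $i=2,3,4$; they pairwise commute. For a partition $\mu=(\mu_1,\dots,\mu_r)$, $m_\mu(x_1,\dots,x_4)$ is the monomial symmetric polynomial: the sum of all distinct monomials $x_1^{\alpha_1}\cdots x_4^{\alpha_4}$ with $(\alpha_1,\dots,\alpha_4)$ a rearrangement of $(\mu_1,\dots,\mu_r,0,\dots,0)$. For $w\in S_4$ and $h\in\mathbb Z S_4$, $\langle w,h\rangle$ denotes the coefficient of $w$ in $h$; for central $h$ this equals the coefficient of the class sum of the conjugacy class of $w$. *)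

From HB Require Import structures.
From mathcomp Require Import all_boot all_order all_algebra all_fingroup.
Set Implicit Arguments. Unset Strict Implicit. Unset Printing Implicit Defensive.
Import GRing.Theory.
Local Open Scope ring_scope.

(* The points {1,2,3,4} are represented by 'I_4 = {0,1,2,3} (point k+1 <-> k). *)
Definition S4 := {perm 'I_4}.

(* The integral group ring Z S_4: finitely supported = all functions S4 -> int;
   h w is the coefficient <w,h> of w in h. *)
Definition ZS4 := {ffun S4 -> int}.

Definition gr_of (w : S4) : ZS4 := [ffun u => (u == w)%:R].
Definition gr_one : ZS4 := gr_of 1%g.
Definition gr_mul (f g : ZS4) : ZS4 :=
  [ffun w => \sum_(u : S4) f u * g ((u^-1 * w)%g)].
Definition gr_exp (f : ZS4) (n : nat) : ZS4 := iter n (gr_mul f) gr_one.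
Definition gr_prod (s : seq ZS4) : ZS4 := foldr gr_mul gr_one s.

Definition tr (a b : 'I_4) : S4 := tperm a b.

(* Jucys-Murphy element L_{i+1} = sum_{k < i} (k i)  (so L_1 = 0) *)
Definition JM (i : 'I_4) : ZS4 := \sum_(k : 'I_4 | (k < i)%N) gr_of (tr k i).

(* monomial symmetric polynomial m_mu evaluated at (x_1..x_4): sum of all
   distinct monomials x^alpha, alpha a rearrangement of mu padded by zeros. *)
Definition exps (mu : seq nat) : seq {ffun 'I_4 -> nat} :=
  undup (map (fun s : S4 => [ffun k : 'I_4 => nth 0%N mu (s k)]) (enum [set: S4])).
Definition msym (mu : seq nat) (x : 'I_4 -> ZS4) : ZS4 :=
  \sum_(alpha <- exps mu) gr_prod [seq gr_exp (x k) (alpha k) | k <- enum 'I_4].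

Definition s1 : S4 := tr (inord 0) (inord 1).
Definition s2 : S4 := tr (inord 1) (inord 2).
Definition s3 : S4 := tr (inord 2) (inord 3).
Definition s12 : S4 := (s1 * s2)%g.
Definition s13 : S4 := (s1 * s3)%g.
Definition s123 : S4 := (s1 * s2 * s3)%g.

Definition m_ij (i j : nat) : ZS4 := msym [:: (i + j)%N; i] JM.

From HB Require Import structures.
From mathcomp Require Import all_boot all_order all_algebra all_fingroup.
From mathcomp Require Import ring.
Set Implicit Arguments.
Unset Strict Implicit.
Unset Printing Implicit Defensive.
Import GRing.Theory.
Local Open Scope ring_scope.

(* The Jucys-Murphy elements L_1..L_4 generate the commutative
   Gelfand-Tsetlin subalgebra of Q S_4, whose primitive idempotents e_T are
   indexed by the ten standard Young tableaux T of size 4; L_k e_T = c_T(k) e_T,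
   where c_T(k) is the content of the box of T containing k.  Consequently
   every polynomial f(L_1,..,L_4) equals sum_T f(c_T) e_T, and
     <w, m_(i+j,i)(L)> = sum_T m_(i+j,i)(c_T) <w, e_T>. *)

Lemma uniq_subset_perm (T : eqType) (s1 s2 : seq T) :
  uniq s1 -> uniq s2 -> {subset s1 <= s2} -> (size s2 <= size s1)%N -> perm_eq s1 s2.
Proof.
move=> uniq_s1 uniq_s2 sub12 size21; apply: uniq_perm => //.
by have [] := uniq_min_size uniq_s1 sub12 size21.
Qed.

Lemma undup_map_in (T1 T2 : eqType) (f : T1 -> T2) (s : seq T1) :
  {in s &, injective f} -> undup [seq f x | x <- s] = [seq f x | x <- undup s].
Proof.
elim: s => [|x s IHs] //= inj_f.
have inj_fs : {in s &, injective f} by move=> y z ys zs; apply: inj_f; rewrite inE ?ys ?zs orbT.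
have -> : (f x \in [seq f y | y <- s]) = (x \in s).
  apply/mapP/idP => [[y ys fxy] | xs]; last by exists x.
  by rewrite (inj_f x y) ?inE ?eqxx ?ys ?orbT.
by case: ifP => _; rewrite /= IHs.
Qed.

Lemma big_undup_partition (V : nmodType) (I J : eqType) (s : seq I) (key : I -> J)
    (F : I -> V) :
  \sum_(x <- s) F x = \sum_(k <- undup [seq key x | x <- s]) \sum_(x <- s | key x == k) F x.
Proof.
rewrite (exchange_big_dep xpredT) //=; apply: eq_big_seq => x xs.
rewrite big_const_seq (eq_count (a2 := pred1 (key x))) => [|k]; last exact: eq_sym.
by rewrite count_uniq_mem ?undup_uniq // mem_undup map_f //= addr0.
Qed.

(* Sums of integer lists, in a form that reduces under vm_compute. *)
Definition sumz (l : seq int) : int := foldr +%R 0 l.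

Lemma big_sumz (T : Type) (l : seq T) (f : T -> int) : \sum_(x <- l) f x = sumz (map f l).
Proof. by elim: l => [|x l IHl]; rewrite ?big_nil ?big_cons ?IHl. Qed.

(* The n-th power of an integer z, split into a sign part and |z|^n; this is
   the normal form in which the final identities are compared. *)
Lemma intr_exp_sign_abs (R : comNzRingType) (z : int) n :
  (z%:~R : R) ^+ n = ((-1) ^+ n) ^+ (z < 0)%R * (`|z|%N%:R) ^+ n.
Proof. by rewrite {1}[z]intEsign rmorphM rmorph_sign exprMn -exprM mulnC exprM. Qed.

Definition code (s : S4) : seq nat := [seq val (s (inord k)) | k <- iota 0 4].

(* The 24 codes, in lexicographic order; tables below are indexed by it. *)
Definition perm_codes : seq (seq nat) :=
  [:: [:: 0; 1; 2; 3]; [:: 0; 1; 3; 2]; [:: 0; 2; 1; 3]; [:: 0; 2; 3; 1];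
      [:: 0; 3; 1; 2]; [:: 0; 3; 2; 1]; [:: 1; 0; 2; 3]; [:: 1; 0; 3; 2];
      [:: 1; 2; 0; 3]; [:: 1; 2; 3; 0]; [:: 1; 3; 0; 2]; [:: 1; 3; 2; 0];
      [:: 2; 0; 1; 3]; [:: 2; 0; 3; 1]; [:: 2; 1; 0; 3]; [:: 2; 1; 3; 0];
      [:: 2; 3; 0; 1]; [:: 2; 3; 1; 0]; [:: 3; 0; 1; 2]; [:: 3; 0; 2; 1];
      [:: 3; 1; 0; 2]; [:: 3; 1; 2; 0]; [:: 3; 2; 0; 1]; [:: 3; 2; 1; 0]].

Lemma perm_codesE : perm_eq perm_codes (permutations (iota 0 4)).
Proof. by vm_compute. Qed.

Lemma size_code s : size (code s) = 4%N.
Proof. by rewrite size_map size_iota. Qed.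

Lemma nth_code s (k : 'I_4) : nth 0%N (code s) k = val (s k).
Proof. by rewrite (nth_map 0%N) ?size_iota // nth_iota // add0n inord_val. Qed.

Lemma code_inj : injective code.
Proof. by move=> s t eq_st; apply/permP => k; apply/val_inj; rewrite -!nth_code eq_st. Qed.

Lemma code_uniq s : uniq (code s).
Proof.
rewrite map_inj_in_uniq ?iota_uniq // => a b; rewrite !mem_iota !add0n => lt_a lt_b.
by move/val_inj/perm_inj/(congr1 (@nat_of_ord 4)); rewrite !inordK.
Qed.

Lemma code_mem s : code s \in perm_codes.
Proof.
rewrite (perm_mem perm_codesE) mem_permutations.
have sub : {subset code s <= iota 0 4}.
  by move=> x /mapP [k _ ->]; rewrite mem_iota add0n ltn_ord.
by apply: (uniq_subset_perm (code_uniq s) (iota_uniq 0 4) sub); rewrite size_code size_iota.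
Qed.

Lemma code_enum : perm_eq [seq code s | s <- enum [set: S4]] perm_codes.
Proof.
apply: uniq_subset_perm; last by rewrite size_map -cardE cardsT card_Sn.
- by rewrite map_inj_uniq ?enum_uniq //; exact: code_inj.
- by vm_compute.
by move=> c /mapP [s _ ->]; apply: code_mem.
Qed.

Definition decode (c : seq nat) : S4 := odflt 1%g [pick s : S4 | code s == c].

Lemma codeK : cancel code decode.
Proof.
rewrite /decode => s; case: pickP => [t /eqP /code_inj //|no_s].
by have := no_s s; rewrite eqxx.
Qed.

Lemma decodeK c : c \in perm_codes -> code (decode c) = c.
Proof. by rewrite -(perm_mem code_enum) => /mapP [s _ ->]; rewrite codeK. Qed.

Lemma decode_eq c w : c \in perm_codes -> (decode c == w) = (c == code w).
Proof. by move=> c_perm; rewrite -(inj_eq code_inj) decodeK. Qed.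

Lemma forall_S4 (P : S4 -> Prop) :
  (forall c, c \in perm_codes -> P (decode c)) -> forall w, P w.
Proof. by move=> P_codes w; rewrite -(codeK w); apply/P_codes/code_mem. Qed.

Lemma sum_S4 (F : S4 -> int) : \sum_(u : S4) F u = \sum_(c <- perm_codes) F (decode c).
Proof.
rewrite -(perm_big _ code_enum) big_map.
under eq_bigr do rewrite codeK.
by rewrite big_enum /=; apply: eq_bigl => u; rewrite in_setT.
Qed.

(* Composition (first a, then b), inversion and transpositions on codes. *)
Definition code_mul (a b : seq nat) : seq nat := [seq nth 0%N b x | x <- a].
Definition code_inv (a : seq nat) : seq nat := [seq index k a | k <- iota 0 4].
Definition code_tperm (a b : nat) : seq nat :=
  [seq if x == a then b else if x == b then a else x | x <- iota 0 4].

Lemma codeM s t : code (s * t)%g = code_mul (code s) (code t).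
Proof.
rewrite /code_mul /code -map_comp; apply: eq_map => k /=.
by rewrite permM -(nth_code t (s (inord k))).
Qed.

Lemma codeV s : code (s^-1)%g = code_inv (code s).
Proof.
rewrite /code_inv {1}/code; apply/eq_in_map => k; rewrite mem_iota add0n => lt_k4.
have def_k : nth 0%N (code s) ((s^-1)%g (inord k)) = k by rewrite nth_code permKV /= inordK.
by rewrite -{2}def_k index_uniq ?size_code ?code_uniq.
Qed.

Lemma code1 : code 1%g = iota 0 4.
Proof.
rewrite /code -{2}(map_id (iota 0 4)); apply/eq_in_map => k.
by rewrite mem_iota add0n perm1 => /inordK.
Qed.

Lemma code_tpermE (a b : 'I_4) : code (tperm a b) = code_tperm a b.
Proof.
rewrite /code /code_tperm; apply/eq_in_map => x; rewrite mem_iota add0n => lt_x4.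
have val_x : val (inord x : 'I_4) = x := inordK lt_x4.
case: tpermP => [<- | <- | ne_a ne_b]; rewrite ?val_x ?eqxx //; first by case: eqP.
have /negPf -> : x != val a by apply/eqP => eq_xa; apply: ne_a; apply: val_inj; rewrite val_x.
by have /negPf -> : x != val b by apply/eqP => eq_xb; apply: ne_b; apply: val_inj; rewrite val_x.
Qed.

Definition entry (l : seq int) (c : seq nat) : int := nth 0 l (index c perm_codes).
Definition table (l : seq int) : ZS4 := [ffun w => entry l (code w)].

Lemma tableE l c : c \in perm_codes -> table l (decode c) = entry l c.
Proof. by move=> c_perm; rewrite ffunE decodeK. Qed.

Definition table_mul (a b : seq int) (c : seq nat) : int :=
  sumz [seq entry a d * entry b (code_mul (code_inv d) c) | d <- perm_codes].

Lemma gr_mul_table a b c : c \in perm_codes ->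
  gr_mul (table a) (table b) (decode c) = table_mul a b c.
Proof.
move=> c_perm; rewrite ffunE sum_S4 big_sumz; congr sumz; apply/eq_in_map => d d_perm.
by rewrite !ffunE codeM codeV !decodeK.
Qed.

(* Spectral calculus: given elements F_0..F_(n-1) with F_t F_t' = N [t = t'] F_t
   and sum_t F_t = N, say that X is diagonal with eigenvalues x when
   N X = sum_t x_t F_t.  Such elements form a subring, on which the
   eigenvalues are computed pointwise. *)
Section Spectral.
Variables (n : nat) (N : int) (F : nat -> ZS4).

Definition diagonal (X : ZS4) (x : nat -> int) :=
  forall w, N * X w = \sum_(t < n) x t * F t w.

Hypothesis N_neq0 : N != 0.
Hypothesis F_orthogonal : forall (t t' : 'I_n) w,
  gr_mul (F t) (F t') w = (t == t')%:R * N * F t w.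
Hypothesis diagonal_one : diagonal gr_one (fun=> 1).

Lemma gr_mul_combinations (x y : nat -> int) w :
  gr_mul [ffun u => \sum_(t < n) x t * F t u] [ffun u => \sum_(t < n) y t * F t u] w =
  \sum_(t < n) \sum_(t' < n) x t * y t' * gr_mul (F t) (F t') w.
Proof.
rewrite ffunE; under eq_bigr do rewrite !ffunE mulr_suml.
rewrite exchange_big; apply: eq_bigr => t _ /=.
under eq_bigr do rewrite mulr_sumr.
rewrite exchange_big; apply: eq_bigr => t' _ /=.
by rewrite ffunE mulr_sumr; apply: eq_bigr => u _; rewrite mulrACA.
Qed.

Lemma diagonal_ext X x y : diagonal X x -> x =1 y -> diagonal X y.
Proof. by move=> diagX eq_xy w; rewrite diagX; apply: eq_bigr => t _; rewrite eq_xy. Qed.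

Lemma diagonal_mul X Y x y : diagonal X x -> diagonal Y y ->
  diagonal (gr_mul X Y) (fun t => x t * y t).
Proof.
move=> diagX diagY w; apply: (mulfI N_neq0).
have -> : N * (N * gr_mul X Y w) = gr_mul [ffun u => N * X u] [ffun u => N * Y u] w.
  by rewrite !ffunE !mulr_sumr; apply: eq_bigr => u _; rewrite !ffunE mulrA mulrACA.
have -> : [ffun u => N * X u] = [ffun u => \sum_(t < n) x t * F t u].
  by apply/ffunP => u; rewrite !ffunE diagX.
have -> : [ffun u => N * Y u] = [ffun u => \sum_(t < n) y t * F t u].
  by apply/ffunP => u; rewrite !ffunE diagY.
rewrite gr_mul_combinations mulr_sumr; apply: eq_bigr => t _.
rewrite (bigD1 t) //= F_orthogonal eqxx big1 ?addr0 => [|t' ne_t't].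
  by rewrite mul1r mulrCA.
by rewrite F_orthogonal eq_sym (negPf ne_t't) !mul0r mulr0.
Qed.

Lemma diagonal_exp X x k : diagonal X x -> diagonal (gr_exp X k) (fun t => x t ^+ k).
Proof.
move=> diagX; elim: k => [|k IHk].
  by apply: diagonal_ext diagonal_one _ => t; rewrite expr0.
by apply: diagonal_ext (diagonal_mul diagX IHk) _ => t; rewrite exprS.
Qed.

Lemma diagonal_prod (I : Type) (s : seq I) (X : I -> ZS4) (x : I -> nat -> int) :
  (forall k, diagonal (X k) (x k)) ->
  diagonal (gr_prod [seq X k | k <- s]) (fun t => \prod_(k <- s) x k t).
Proof.
move=> diagX; elim: s => [|k s IHs] /=.
  by apply: diagonal_ext diagonal_one _ => t; rewrite big_nil.
by apply: diagonal_ext (diagonal_mul (diagX k) IHs) _ => t; rewrite big_cons.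
Qed.

Lemma diagonal_sum (I : Type) (s : seq I) (X : I -> ZS4) (x : I -> nat -> int) :
  (forall k, diagonal (X k) (x k)) ->
  diagonal (\sum_(k <- s) X k) (fun t => \sum_(k <- s) x k t).
Proof.
move=> diagX w; rewrite sum_ffunE mulr_sumr.
under eq_bigr do rewrite diagX.
by rewrite exchange_big; apply: eq_bigr => t _; rewrite mulr_suml.
Qed.
End Spectral.

(* Contents of the ten standard Young tableaux of size 4: entry k of a row is
   the content of the box holding k+1. *)
Definition gt_contents : seq (seq int) :=
  [:: [:: 0; 1; 2; 3]; [:: 0; 1; 2; -1]; [:: 0; 1; -1; 2]; [:: 0; 1; -1; 0];
      [:: 0; 1; -1; -2]; [:: 0; -1; 1; 2]; [:: 0; -1; 1; 0]; [:: 0; -1; 1; -2];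
      [:: 0; -1; -2; 1]; [:: 0; -1; -2; -3]].

(* The coefficients, along perm_codes, of 48 e_T for the corresponding
   primitive idempotents e_T of the Gelfand-Tsetlin algebra of S_4. *)
Definition gt_tables : seq (seq int) :=
  [:: [:: 2; 2; 2; 2; 2; 2; 2; 2; 2; 2; 2; 2; 2; 2; 2; 2; 2; 2; 2; 2; 2; 2; 2; 2];
      [:: 6; -2; 6; -2; -2; -2; 6; -2; 6; -2; -2; -2; 6; -2; 6; -2; -2; -2; -2; -2; -2; -2; -2; -2];
      [:: 6; 2; -3; -1; -1; 5; 6; 2; -3; -1; -1; 5; -3; -1; -3; -1; -4; -4; -1; 5; -1; 5; -4; -4];
      [:: 4; 4; -2; -2; -2; -2; 4; 4; -2; -2; -2; -2; -2; -2; -2; -2; 4; 4; -2; -2; -2; -2; 4; 4];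
      [:: 6; -6; -3; 3; 3; -3; 6; -6; -3; 3; 3; -3; -3; 3; -3; 3; 0; 0; 3; -3; 3; -3; 0; 0];
      [:: 6; 6; 3; 3; 3; 3; -6; -6; -3; -3; -3; -3; -3; -3; 3; 3; 0; 0; -3; -3; 3; 3; 0; 0];
      [:: 4; -4; 2; -2; -2; 2; -4; 4; -2; 2; 2; -2; -2; 2; 2; -2; 4; -4; 2; -2; -2; 2; -4; 4];
      [:: 6; -2; 3; -1; -1; -5; -6; 2; -3; 1; 1; 5; -3; 1; 3; -1; -4; 4; 1; 5; -1; -5; 4; -4];
      [:: 6; 2; -6; -2; -2; 2; -6; -2; 6; 2; 2; -2; 6; 2; -6; -2; -2; 2; 2; -2; -2; 2; 2; -2];
      [:: 2; -2; -2; 2; 2; -2; -2; 2; 2; -2; -2; 2; 2; -2; -2; 2; 2; -2; -2; 2; 2; -2; -2; 2]].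

Definition gt_row (t : nat) : seq int := nth [::] gt_tables t.
Definition GT (t : nat) : ZS4 := table (gt_row t).
Definition content (t k : nat) : int := nth 0 (nth [::] gt_contents t) k.

Definition gt_diagonal : ZS4 -> (nat -> int) -> Prop := diagonal 10 48 GT.

Fact gt_scale_neq0 : 48 != 0 :> int. Proof. by []. Qed.

Lemma gt_diagonal_from_codes (X : ZS4) (x : nat -> int) :
  (forall c, c \in perm_codes ->
     48 * X (decode c) = sumz [seq x t * entry (gt_row t) c | t <- iota 0 10]) ->
  gt_diagonal X x.
Proof.
move=> X_codes; apply: forall_S4 => c c_perm.
rewrite X_codes // -big_sumz -(big_mkord xpredT (fun t => x t * GT t (decode c))).
by apply: eq_bigr => t _; rewrite /GT tableE.
Qed.

Lemma gt_orthogonal_certificate :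
  all (fun t => all (fun t' => all (fun c =>
    table_mul (gt_row t) (gt_row t') c == (t == t')%:R * 48 * entry (gt_row t) c)
    perm_codes) (iota 0 10)) (iota 0 10).
Proof. by vm_compute. Qed.

Lemma gt_orthogonal (t t' : 'I_10) w : gr_mul (GT t) (GT t') w = (t == t')%:R * 48 * GT t w.
Proof.
have mem_t (s : 'I_10) : val s \in iota 0 10 by rewrite mem_iota ltn_ord.
move: w; apply: forall_S4 => c c_perm.
rewrite (gr_mul_table _ _ c_perm) (tableE _ c_perm); apply/eqP.
by move/allP/(_ _ (mem_t t))/allP/(_ _ (mem_t t'))/allP/(_ _ c_perm): gt_orthogonal_certificate.
Qed.

Lemma gt_one_certificate :
  all (fun c => 48 * (c == iota 0 4)%:R == sumz [seq 1 * entry (gt_row t) c | t <- iota 0 10])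
    perm_codes.
Proof. by vm_compute. Qed.

Lemma gt_diagonal_one : gt_diagonal gr_one (fun=> 1).
Proof.
apply: gt_diagonal_from_codes => c c_perm; apply/eqP.
by rewrite ffunE decode_eq // code1; move/allP/(_ _ c_perm): gt_one_certificate.
Qed.

Definition JM_code (k : nat) (c : seq nat) : int :=
  sumz [seq if (m < k)%N then (c == code_tperm m k)%:R else 0 | m <- iota 0 4].

Lemma JM_decode (k : 'I_4) c : c \in perm_codes -> JM k (decode c) = JM_code k c.
Proof.
move=> c_perm; rewrite /JM sum_ffunE big_mkcond /= /JM_code -big_sumz.
rewrite -[iota 0 4]/(index_iota 0 4) big_mkord; apply: eq_bigr => m _; case: ifP => // _.
by rewrite ffunE decode_eq // code_tpermE.
Qed.

Lemma gt_JM_certificate :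
  all (fun k => all (fun c =>
    48 * JM_code k c == sumz [seq content t k * entry (gt_row t) c | t <- iota 0 10])
    perm_codes) (iota 0 4).
Proof. by vm_compute. Qed.

Lemma gt_diagonal_JM (k : 'I_4) : gt_diagonal (JM k) (content^~ k).
Proof.
have mem_k : val k \in iota 0 4 by rewrite mem_iota ltn_ord.
apply: gt_diagonal_from_codes => c c_perm; apply/eqP; rewrite JM_decode //.
by move/allP/(_ _ mem_k)/allP/(_ _ c_perm): gt_JM_certificate.
Qed.

Lemma gt_diagonal_msym (mu : seq nat) :
  gt_diagonal (msym mu JM)
    (fun t => \sum_(a <- exps mu) \prod_(k <- enum 'I_4) content t k ^+ a k).
Proof.
apply: diagonal_sum => a.
apply: (diagonal_prod gt_scale_neq0 gt_orthogonal gt_diagonal_one) => k.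
exact: (diagonal_exp gt_scale_neq0 gt_orthogonal gt_diagonal_one _ (gt_diagonal_JM k)).
Qed.

Definition two_part_exp (a b : nat) (p q : 'I_4) : {ffun 'I_4 -> nat} :=
  [ffun k => if k == p then a else if k == q then b else 0%N].

Definition pos01 (s : S4) : 'I_4 * 'I_4 := ((s^-1)%g ord0, (s^-1)%g (inord 1)).

Lemma exps_pos01 a b :
  exps [:: a; b] = undup [seq two_part_exp a b (pos01 s).1 (pos01 s).2 | s <- enum [set: S4]].
Proof.
congr undup; apply: eq_map => s; apply/ffunP => k; rewrite !ffunE /=.
rewrite -!(can2_eq (permK s) (permKV s)).
by case: (s k) => -[|[|[|m]]] lt_m; rewrite -!val_eqE /= ?inordK.
Qed.

(* Every pair of distinct positions occurs: send p to 0, then (the image of) q to 1. *)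
Lemma pos01_mem (pq : 'I_4 * 'I_4) :
  (pq \in [seq pos01 s | s <- enum [set: S4]]) = (pq.2 != pq.1).
Proof.
case: pq => p q /=; apply/mapP/idP => [[s _ [-> ->]] | ne_qp].
  by rewrite (inj_eq (@perm_inj _ _)) -val_eqE /= inordK.
pose t0 := tperm p ord0; pose s : S4 := (t0 * tperm (t0 q) (inord 1))%g.
have t0q_neq0 : t0 q != ord0 by rewrite -(tpermL p ord0) (inj_eq (@perm_inj _ _)).
have sp : s p = ord0 by rewrite permM tpermL tpermD // eq_sym -val_eqE /= inordK.
have sq : s q = inord 1 by rewrite permM tpermL.
exists s; first by rewrite mem_enum inE.
by rewrite /pos01 -{1}sp -{1}sq !permK.
Qed.

Lemma prod_two_part_exp (R : comNzRingType) (x : 'I_4 -> R) a b (p q : 'I_4) : q != p ->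
  \prod_(k <- enum 'I_4) x k ^+ two_part_exp a b p q k = x p ^+ a * x q ^+ b.
Proof.
move=> ne_qp; rewrite big_enum /= (bigD1 p) //= (bigD1 q) //=.
rewrite big1 ?mulr1 => [|k /andP [ne_kq ne_kp]]; first by rewrite !ffunE eqxx (negPf ne_qp) eqxx.
by rewrite ffunE (negPf ne_kp) (negPf ne_kq).
Qed.

Lemma msym_two_parts (R : comNzRingType) (x : 'I_4 -> R) a b :
  a != b -> a != 0%N -> b != 0%N ->
  \sum_(e <- exps [:: a; b]) \prod_(k <- enum 'I_4) x k ^+ e k =
  \sum_(p : 'I_4) \sum_(q : 'I_4 | q != p) x p ^+ a * x q ^+ b.
Proof.
move=> ne_ab a_neq0 b_neq0.
pose P := [seq pos01 s | s <- enum [set: S4]].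
have inj_exp : {in P &, injective (fun pq => two_part_exp a b pq.1 pq.2)}.
  move=> [p q] [p' q']; rewrite !pos01_mem /= => ne_qp _ /ffunP eq_exp.
  have eq_pp' : p = p'.
    have := eq_exp p; rewrite !ffunE eqxx; case: eqP => // _.
    by case: ifP => _ eq_a; [rewrite eq_a eqxx in ne_ab | rewrite eq_a in a_neq0].
  subst p'; have := eq_exp q; rewrite !ffunE eqxx (negPf ne_qp); case: eqP => [-> // | _].
  by move=> eq_b; rewrite eq_b in b_neq0.
rewrite exps_pos01 (map_comp (fun pq => two_part_exp a b pq.1 pq.2) pos01).
rewrite undup_map_in // big_map big_uniq ?undup_uniq //.
rewrite pair_big_dep; apply: eq_big => [pq | pq]; rewrite mem_undup pos01_mem //.
exact: prod_two_part_exp.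
Qed.

(* Exponential sums: a list of triples (f, a, b) stands for sum f * a^j * b^i.
   Normalization merges the triples with equal bases and drops vanishing ones. *)
Section ExponentialSums.
Variables i j : nat.
Hypotheses (i_gt0 : (0 < i)%N) (j_gt0 : (0 < j)%N).

Definition eval_terms (l : seq (int * int * int)) : int :=
  \sum_(r <- l) r.1.1 * r.1.2 ^+ j * r.2 ^+ i.

Definition normalize_terms (l : seq (int * int * int)) : seq (int * int * int) :=
  [seq r <- [seq (sumz [seq r.1.1 | r <- l & (r.1.2, r.2) == ab], ab.1, ab.2)
            | ab <- undup [seq (r.1.2, r.2) | r <- l]]
   | [&& r.1.1 != 0, r.1.2 != 0 & r.2 != 0]].

(* Dropping zero bases is where the exponents i and j must be positive. *)
Lemma eval_normalize_terms l : eval_terms (normalize_terms l) = eval_terms l.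
Proof.
rewrite /eval_terms big_filter big_mkcond /= big_map.
rewrite [RHS](big_undup_partition _ (fun r => (r.1.2, r.2))); apply: eq_bigr => ab _.
have -> : \sum_(r <- l | (r.1.2, r.2) == ab) r.1.1 * r.1.2 ^+ j * r.2 ^+ i =
          sumz [seq r.1.1 | r <- l & (r.1.2, r.2) == ab] * ab.1 ^+ j * ab.2 ^+ i.
  by rewrite -big_sumz big_filter !mulr_suml; apply: eq_bigr => r /eqP <-.
case: ab => a b /=; set f := sumz _.
case: (eqVneq f 0) => [-> | _]; first by rewrite !mul0r.
case: (eqVneq a 0) => [-> | _]; first by rewrite expr0n eqn0Ngt j_gt0 mulr0 mul0r.
by case: (eqVneq b 0) => [-> | _]; rewrite ?expr0n ?eqn0Ngt ?i_gt0 ?mulr0.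
Qed.

Lemma eval_terms_intr (R : comNzRingType) l :
  (eval_terms l)%:~R =
  \sum_(r <- l) r.1.1%:~R * (((-1) ^+ j) ^+ (r.1.2 < 0)%R * (`|r.1.2|%N%:R) ^+ j)
                         * (((-1) ^+ i) ^+ (r.2 < 0)%R * (`|r.2|%N%:R) ^+ i) :> R.
Proof.
rewrite rmorph_sum; apply: eq_bigr => r _.
by rewrite !rmorphM !rmorphXn !intr_exp_sign_abs.
Qed.
End ExponentialSums.

Definition entry_terms (c : seq nat) : seq (int * int * int) :=
  flatten [seq [seq (entry (gt_row t) c, content t p, content t p * content t q)
               | p <- iota 0 4, q <- [seq q <- iota 0 4 | q != p]]
          | t <- iota 0 10].

Lemma m_entry_terms i j w : (0 < i)%N -> (0 < j)%N ->
  48 * m_ij i j w = eval_terms i j (entry_terms (code w)).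
Proof.
move=> i_gt0 j_gt0; rewrite /m_ij (gt_diagonal_msym _ w).
rewrite /eval_terms big_flatten big_map -[iota 0 10]/(index_iota 0 10) big_mkord.
apply: eq_bigr => t _; rewrite big_allpairs_dep.
rewrite (msym_two_parts (fun k => content t k)); first last.
- by rewrite -lt0n.
- by rewrite addn_eq0 negb_and -!lt0n i_gt0.
- by rewrite -{2}[i]addn0 eqn_add2l -lt0n.
rewrite -[iota 0 4]/(index_iota 0 4) big_mkord mulr_suml; apply: eq_bigr => p _.
rewrite big_filter big_mkord mulr_suml; apply: eq_bigr => q _.
by rewrite ffunE exprD exprMn; ring.
Qed.

Lemma m_entry_normal_form i j w : (0 < i)%N -> (0 < j)%N ->
  48%:R * ((m_ij i j w)%:~R : rat) =
  \sum_(r <- normalize_terms (entry_terms (code w)))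
    r.1.1%:~R * (((-1) ^+ j) ^+ (r.1.2 < 0)%R * (`|r.1.2|%N%:R) ^+ j)
              * (((-1) ^+ i) ^+ (r.2 < 0)%R * (`|r.2|%N%:R) ^+ i).
Proof.
move=> i_gt0 j_gt0; rewrite -eval_terms_intr eval_normalize_terms //.
by rewrite -m_entry_terms // intrM.
Qed.

Lemma code_s1 : code s1 = code_tperm 0 1.
Proof. by rewrite /s1 /tr code_tpermE !inordK. Qed.

Lemma code_s12 : code s12 = code_mul (code_tperm 0 1) (code_tperm 1 2).
Proof. by rewrite /s12 codeM code_s1 /s2 /tr code_tpermE !inordK. Qed.

Lemma code_s13 : code s13 = code_mul (code_tperm 0 1) (code_tperm 2 3).
Proof. by rewrite /s13 codeM code_s1 /s3 /tr code_tpermE !inordK. Qed.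

Lemma code_s123 :
  code s123 = code_mul (code_mul (code_tperm 0 1) (code_tperm 1 2)) (code_tperm 2 3).
Proof. by rewrite /s123 codeM -/s12 code_s12 /s3 /tr code_tpermE !inordK. Qed.

(* Closes a goal <w, m_(i+j,i)> = closed form, given the code of w: the normal
   form of the exponential sum is computed, and both sides are compared as
   rational expressions in (-1)^i, (-1)^j, 2^i, 2^j, 3^i, 3^j and 6^i. *)
Ltac closed_form_entry code_w :=
  apply: (mulfI (_ : 48%:R != 0 :> rat)) => //;
  rewrite m_entry_normal_form // code_w;
  match goal with |- context [normalize_terms ?l] =>
    let v := eval vm_compute in (normalize_terms l) in
    rewrite (_ : normalize_terms l = v); last by vm_compute
  end;
  rewrite !big_cons big_nil /= !exprD ?mulr1n ?expr1n;
  field.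

Theorem proposition2p6 (i j : nat) (hi : (1 <= i)%N) (hj : (1 <= j)%N) :
  let m := m_ij i j in
  let e (n : nat) : rat := (-1) ^+ n in
  let P (b n : nat) : rat := (b%:R) ^+ n in
  [/\ (m 1%g)%:~R = 1 / 24%:R * (1 + e j) *
        (P 6%N i * P 3%N j + P 6%N i * P 2%N j + P 3%N (i + j)%N + P 3%N i
         + (10%:R + 9%:R * e i) * (P 2%N (i + j)%N + P 2%N i) + 22%:R * e i),
      (m s1)%:~R = 1 / 24%:R * (1 - e j) *
        (P 3%N j * P 6%N i + P 2%N j * P 6%N i + P 3%N (i + j)%N + P 3%N i
         + (4%:R + 3%:R * e i) * P 2%N (i + j)%N + (4%:R - 3%:R * e i) * P 2%N i),
      (m s12)%:~R = 1 / 24%:R * (1 + e j) *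
        (P 3%N j * P 6%N i + P 2%N j * P 6%N i + P 3%N (i + j)%N + P 3%N i
         + P 2%N (i + j)%N + P 2%N i - 2%:R * e i),
      (m s13)%:~R = 1 / 24%:R * (1 + e j) *
        (P 3%N j * P 6%N i + P 2%N j * P 6%N i + P 3%N (i + j)%N + P 3%N i
         - (2%:R + 3%:R * e i) * (P 2%N i + P 2%N (i + j)%N) - 2%:R * e i)
    & (m s123)%:~R = 1 / 24%:R * (1 - e j) *
        (P 3%N j * P 6%N i + P 2%N j * P 6%N i + P 3%N i + P 3%N (i + j)%N
         + 3%:R * e i * (P 2%N i - P 2%N (i + j)%N) - 2%:R * (P 2%N i + P 2%N (i + j)%N))].
Proof.
move=> m e P; rewrite /m /e /P; split.
- by closed_form_entry code1.
- by closed_form_entry code_s1.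
- by closed_form_entry code_s12.
- by closed_form_entry code_s13.
- by closed_form_entry code_s123.
Qed.
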